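(* Let $\sigma>0$, $\eta>0$, $\hat\alpha>0$, $h>0$, $r\ge0$, $a\in\mathbb{R}$, and for $\beta\ge0$ let $v_\beta$ denote the unique $C^1[0,\infty)$ solution of $\frac{\sigma^2}2v'(y)=\beta+\frac{\hat\alpha}4v(y)^2+\eta y(v(y)-\frac h\eta)-av(y)$, $y\ge0$, $v(0)=-r$. Let $\underline\beta_2=-ar-\frac{\hat\alpha r^2}4$. If $a>-\frac{\hat\alpha}4r$ then $\beta_1^*:=\inf\mathcal I_1>0$; if $a\le-\frac{\hat\alpha}4r$ then $\beta_2^*:=\inf\mathcal I_2>0$.
   Context: $\mathcal I_1=\{\beta\ge0: v_\beta$ is nondecreasing on $(0,\infty)\}$ and $\mathcal I_2=\{\beta>\underline\beta_2: v_\beta$ is nondecreasing on $(0,\infty)\}$. *)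

From Stdlib Require Import Reals.
From Coquelicot Require Import Coquelicot.
Open Scope R_scope.

Definition ric_rhs (eta ahat h a beta y w : R) : R :=
  beta + ahat / 4 * w ^ 2 + eta * y * (w - h / eta) - a * w.

(* v is a C^1[0,oo) solution of the ODE with v(0) = -r.
   At y > 0 the (two-sided) derivative exists and satisfies the ODE; at y = 0
   the right derivative exists and satisfies the ODE.  (Continuity of v' on
   [0,oo) is then automatic, since v' = (2/sigma^2) * ric_rhs(y, v y).) *)
Definition is_sol (sigma eta ahat h r a beta : R) (v : R -> R) : Prop :=
  v 0 = - r /\
  (forall y, 0 < y -> exists d, is_derive v y d /\
       sigma ^ 2 / 2 * d = ric_rhs eta ahat h a beta y (v y)) /\
  (exists d0, filterlim (fun t => (v t - v 0) / t) (at_right 0) (locally d0) /\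
       sigma ^ 2 / 2 * d0 = ric_rhs eta ahat h a beta 0 (v 0)).

Definition nondecr_pos (v : R -> R) : Prop :=
  forall x y, 0 < x -> x <= y -> v x <= v y.

(* "v_beta is nondecreasing on (0,oo)", where v_beta is the (unique) solution *)
Definition vbeta_nondecr (sigma eta ahat h r a beta : R) : Prop :=
  exists v, is_sol sigma eta ahat h r a beta v /\ nondecr_pos v.

Definition beta2_low (ahat r a : R) : R := - a * r - ahat * r ^ 2 / 4.

Definition I1 (sigma eta ahat h r a : R) : R -> Prop :=
  fun beta => 0 <= beta /\ vbeta_nondecr sigma eta ahat h r a beta.

Definition I2 (sigma eta ahat h r a : R) : R -> Prop :=
  fun beta => beta2_low ahat r a < beta /\ vbeta_nondecr sigma eta ahat h r a beta.

(* A solution v that is nondecreasing on (0, oo) has a nonnegative right-hand side along its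
   graph and stays above v 0 = -r.  If it stayed below a level w < h/eta, the term
   eta*y*(v - h/eta) <= -y*(h - eta*w) would eventually make the right-hand side negative, so v
   crosses every level w in (-r, h/eta) at some time y > 0, where
   0 <= beta + ahat/4 w^2 - a w - y (h - eta w), hence beta > a w - ahat/4 w^2.  For a != 0 (with
   a > -ahat r/2) some level makes this bound positive.  In the two degenerate cases a = 0 < r and
   r = 0 the same inequality only bounds the crossing time from above, by O(beta); comparing it
   with the time the ODE needs to climb that far at bounded slope gives beta >= c > 0.  When
   beta2_low > 0 the bound on I2 is immediate. *)

From Stdlib Require Import Reals Lra Psatz Classical.
From Coquelicot Require Import Coquelicot.
Open Scope R_scope.

Lemma at_right_0_between y : 0 < y -> at_right 0 (fun t => 0 < t < y).
Proof.
  intros Hy. unfold at_right, within.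
  apply (filter_imp (fun t => t < y)); [intros t Hty Ht; lra | exact (open_lt y 0 Hy)].
Qed.

Lemma right_cont_of_right_quotient (f : R -> R) l :
  filterlim (fun t => (f t - f 0) / t) (at_right 0) (locally l) ->
  filterlim f (at_right 0) (locally (f 0)).
Proof.
  intros Hq.
  assert (Hid : filterlim (fun t => t) (at_right 0) (locally 0)).
  { apply (filterlim_filter_le_1 _ (filter_le_within (F := locally 0) _)), filterlim_id. }
  assert (Hinc : filterlim (fun t => t * ((f t - f 0) / t)) (at_right 0) (locally 0)).
  { replace (locally 0) with (locally (0 * l)) by (f_equal; ring).
    apply (filterlim_comp_2 _ _ Rmult Hid Hq), (filterlim_mult (K := R_AbsRing)). }
  apply (filterlim_ext_loc (fun t => f 0 + t * ((f t - f 0) / t))).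
  { apply (filter_imp (fun t => 0 < t < 1)); [intros t Ht; field; lra | apply at_right_0_between; lra]. }
  replace (locally (f 0)) with (locally (f 0 + 0)) by (f_equal; ring).
  apply (filterlim_comp_2 _ _ Rplus (filterlim_const (f 0)) Hinc), (filterlim_plus (V := R_NormedModule)).
Qed.

Lemma is_derive_nonneg_of_nondecr (f : R -> R) x l :
  is_derive f x l -> (forall t, 0 < t -> f x <= f (x + t)) -> 0 <= l.
Proof.
  intros Hd Hmono. apply is_derive_Reals in Hd.
  apply Rnot_lt_le; intros Hl.
  destruct (Hd (- l / 2) ltac:(lra)) as [del Hdel].
  pose proof (cond_pos del) as Hdel0.
  specialize (Hdel (del / 2) ltac:(lra) ltac:(rewrite Rabs_right; lra)).
  assert (0 <= (f (x + del / 2) - f x) / (del / 2)).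
  { pose proof (Hmono (del / 2) ltac:(lra)). apply Rdiv_le_0_compat; lra. }
  apply Rabs_def2 in Hdel. lra.
Qed.

Section NondecreasingSolution.

Variables (sigma eta ahat h r a beta : R) (v : R -> R).
Hypothesis Heta : 0 < eta.
Hypothesis Hahat : 0 < ahat.
Hypothesis Hsol : is_sol sigma eta ahat h r a beta v.
Hypothesis Hmono : nondecr_pos v.

Lemma sol_right_cont : filterlim v (at_right 0) (locally (- r)).
Proof.
  destruct Hsol as [Hv0 [_ [d0 [Hq _]]]]. rewrite <- Hv0.
  exact (right_cont_of_right_quotient v d0 Hq).
Qed.

Lemma sol_continuous y : 0 < y -> continuity_pt v y.
Proof.
  intros Hy. destruct Hsol as [_ [Hd _]]. destruct (Hd y Hy) as [d [Hdy _]].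
  apply continuity_pt_filterlim, (ex_derive_continuous (K := R_AbsRing) (V := R_NormedModule)).
  now exists d.
Qed.

Lemma sol_rhs_nonneg y : 0 < y -> 0 <= ric_rhs eta ahat h a beta y (v y).
Proof.
  intros Hy. destruct Hsol as [_ [Hd _]]. destruct (Hd y Hy) as [d [Hdy <-]].
  apply Rmult_le_pos; [pose proof (pow2_ge_0 sigma); lra |].
  apply (is_derive_nonneg_of_nondecr v y); [exact Hdy |].
  intros t Ht. apply Hmono; lra.
Qed.

Lemma sol_ge_init y : 0 < y -> - r <= v y.
Proof.
  intros Hy.
  apply (closed_filterlim_loc v (fun u => u <= v y) (- r) sol_right_cont); [| apply closed_le].
  apply (filter_imp (fun t => 0 < t < y)); [intros t Ht; apply Hmono; lra |].
  now apply at_right_0_between.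
Qed.

Lemma sol_below_early u : - r < u -> exists t, 0 < t /\ v t < u.
Proof.
  intros Hu. apply (filter_ex (F := at_right 0)), filter_and.
  - apply (filter_imp (fun t => 0 < t < 1)); [intros t Ht; lra | apply at_right_0_between; lra].
  - exact (sol_right_cont _ (open_lt u (- r) Hu)).
Qed.

Lemma sol_exceeds w : w < h / eta -> exists y, 0 < y /\ w < v y.
Proof.
  intros Hw. apply Rlt_div_r in Hw; [| lra].
  apply NNPP; intros Hnot.
  assert (Hle : forall y, 0 < y -> v y <= w).
  { intros y Hy. apply Rnot_lt_le. intros Hlt. apply Hnot. now exists y. }
  (* While v stays in [-r, w], the rest of the right-hand side is bounded by C. *)
  set (C := beta + (ahat / 4 + 1 / 2) * (r ^ 2 + w ^ 2) + a ^ 2 / 2).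
  set (y := (Rabs C + 1) / (h - eta * w)).
  assert (Hy : 0 < y) by (apply Rdiv_lt_0_compat; pose proof (Rabs_pos C); lra).
  pose proof (sol_rhs_nonneg y Hy) as Hrhs. unfold ric_rhs in Hrhs.
  pose proof (sol_ge_init y Hy). pose proof (Hle y Hy).
  assert (Hdrift : eta * y * (v y - h / eta) <= - (Rabs C + 1)).
  { replace (eta * y * (v y - h / eta)) with (- y * (h - eta * v y)) by (field; lra).
    replace (- (Rabs C + 1)) with (- y * (h - eta * w)) by (unfold y; field; lra).
    assert (eta * v y <= eta * w) by (apply Rmult_le_compat_l; lra).
    nra. }
  assert (v y ^ 2 <= r ^ 2 + w ^ 2) by (destruct (Rle_or_lt 0 (v y)); nra).
  assert (ahat / 4 * v y ^ 2 <= ahat / 4 * (r ^ 2 + w ^ 2)) by (apply Rmult_le_compat_l; lra).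
  assert (- a * v y <= (a ^ 2 + v y ^ 2) / 2) by (pose proof (pow2_ge_0 (a + v y)); nra).
  pose proof (Rle_abs C). unfold C in *. nra.
Qed.

Lemma sol_crosses eps w : 0 < eps -> v eps < w -> w < h / eta ->
  exists y, eps < y /\ v y = w.
Proof.
  intros Heps Hlt Hw.
  destruct (sol_exceeds w Hw) as [Y [HY HwY]].
  assert (HeY : eps < Y) by (apply Rnot_le_lt; intros HYe; pose proof (Hmono Y eps HY HYe); lra).
  destruct (Ranalysis5.IVT_interv (fun x => v x - w) eps Y) as [z [[Hz1 _] Hz]];
    cbv beta; try lra.
  - intros x Hx. apply continuity_pt_minus; [apply sol_continuous; lra |].
    apply continuity_pt_const. now intros ? ?.
  - exists z. destruct Hz1 as [Hz1 | <-]; split; lra.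
Qed.

Lemma sol_crossing u w : - r < u < w -> w < h / eta ->
  exists eps y, 0 < eps < y /\ v eps < u /\ v y = w.
Proof.
  intros Hu Hw.
  destruct (sol_below_early u (proj1 Hu)) as [eps [Heps Hlow]].
  destruct (sol_crosses eps w Heps ltac:(lra) Hw) as [y [Hy Hvy]].
  now exists eps, y.
Qed.

Lemma sol_increment_le eps y M : 0 < eps < y ->
  (forall z, eps <= z <= y -> ric_rhs eta ahat h a beta z (v z) <= M) ->
  sigma ^ 2 / 2 * (v y - v eps) <= M * (y - eps).
Proof.
  intros Hy HM. destruct Hsol as [_ [Hd _]].
  destruct (MVT_gen v eps y (Derive v)) as [c [Hc Heq]];
    rewrite ?Rmin_left, ?Rmax_right in * by lra.
  - intros x Hx. destruct (Hd x ltac:(lra)) as [d [Hdx _]].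
    now rewrite (is_derive_unique v x d Hdx).
  - intros x Hx. apply sol_continuous. lra.
  - destruct (Hd c ltac:(lra)) as [d [Hdc Hode]].
    rewrite Heq, (is_derive_unique v c d Hdc).
    specialize (HM c Hc). rewrite <- Hode in HM.
    replace (sigma ^ 2 / 2 * (d * (y - eps))) with (sigma ^ 2 / 2 * d * (y - eps)) by ring.
    apply Rmult_le_compat_r; lra.
Qed.

Lemma beta_gt_level w : - r < w < h / eta -> a * w - ahat / 4 * w ^ 2 < beta.
Proof.
  intros [Hrw Hw].
  destruct (sol_crossing ((w - r) / 2) w) as (eps & y & Hy & _ & Hvy); [lra | exact Hw |].
  pose proof (sol_rhs_nonneg y ltac:(lra)) as Hrhs. unfold ric_rhs in Hrhs. rewrite Hvy in Hrhs.
  apply Rlt_div_r in Hw; [| lra].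
  assert (eta * y * (w - h / eta) = - y * (h - w * eta)) by (field; lra).
  nra.
Qed.

Lemma sol_rise w : a <= 0 -> - r < w -> 0 <= w < h / eta ->
  exists y, 0 < y /\
    y * (h - eta * w) <= beta + ahat / 4 * w ^ 2 - a * w /\
    sigma ^ 2 / 2 * ((w + r) / 2) <=
      (beta + ahat / 4 * (r ^ 2 + w ^ 2) - a * w + eta * y * w) * y.
Proof.
  intros Ha Hrw [Hw0 Hw].
  assert (Hh : 0 < h) by (apply Rlt_div_r in Hw; nra).
  destruct (sol_crossing ((w - r) / 2) w) as (eps & y & Hy & Hlow & Hvy); [lra | exact Hw |].
  pose proof (sol_rhs_nonneg y ltac:(lra)) as Hrhs. unfold ric_rhs in Hrhs. rewrite Hvy in Hrhs.
  assert (Hcross : y * (h - eta * w) <= beta + ahat / 4 * w ^ 2 - a * w).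
  { replace (eta * y * (w - h / eta)) with (- (y * (h - eta * w))) in Hrhs by (field; lra). lra. }
  exists y. split; [lra | split; [exact Hcross |]].
  set (M := beta + ahat / 4 * (r ^ 2 + w ^ 2) - a * w + eta * y * w).
  assert (HM : forall z, eps <= z <= y -> ric_rhs eta ahat h a beta z (v z) <= M).
  { intros z Hz. unfold ric_rhs, M.
    pose proof (sol_ge_init z ltac:(lra)).
    assert (v z <= w) by (rewrite <- Hvy; apply Hmono; lra).
    assert (v z ^ 2 <= r ^ 2 + w ^ 2) by (destruct (Rle_or_lt 0 (v z)); nra).
    assert (ahat / 4 * v z ^ 2 <= ahat / 4 * (r ^ 2 + w ^ 2)) by (apply Rmult_le_compat_l; lra).
    assert (z * v z <= y * w) by nra.
    assert (eta * (z * v z) <= eta * (y * w)) by (apply Rmult_le_compat_l; lra).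
    replace (eta * z * (v z - h / eta)) with (eta * (z * v z) - h * z) by (field; lra).
    nra. }
  pose proof (sol_increment_le eps y M Hy HM).
  assert (0 <= M).
  { apply Rlt_div_r in Hw; [| lra].
    assert (0 <= y * (h - eta * w)) by (apply Rmult_le_pos; lra).
    assert (0 <= ahat / 4 * r ^ 2) by (pose proof (pow2_ge_0 r); nra).
    assert (0 <= eta * y * w) by (apply Rmult_le_pos; [apply Rmult_le_pos |]; lra).
    unfold M. lra. }
  assert (sigma ^ 2 / 2 * ((w + r) / 2) <= sigma ^ 2 / 2 * (w - v eps))
    by (apply Rmult_le_compat_l; [pose proof (pow2_ge_0 sigma) |]; lra).
  rewrite Hvy in *. nra.
Qed.

End NondecreasingSolution.

Definition has_pos_lower_bound (E : R -> Prop) : Prop :=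
  exists d, 0 < d /\ forall b, E b -> d <= b.

Lemma has_pos_lower_bound_sub (E F : R -> Prop) :
  (forall b, E b -> F b) -> has_pos_lower_bound F -> has_pos_lower_bound E.
Proof. intros HEF [d [Hd HF]]. exists d. split; [exact Hd |]. intros b Hb. apply HF, HEF, Hb. Qed.

Lemma Glb_Rbar_gt0 (E : R -> Prop) : has_pos_lower_bound E -> Rbar_lt 0 (Glb_Rbar E).
Proof.
  intros [d [Hd HE]]. destruct (Glb_Rbar_correct E) as [_ Hglb].
  assert (Hle : Rbar_le d (Glb_Rbar E)) by (apply Hglb; intros b Hb; apply HE, Hb).
  destruct (Glb_Rbar E); simpl in *; [lra | exact I | contradiction].
Qed.

Section LowerBounds.

Variables (sigma eta ahat h r a : R).
Hypothesis Hsigma : 0 < sigma.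
Hypothesis Heta : 0 < eta.
Hypothesis Hahat : 0 < ahat.
Hypothesis Hh : 0 < h.
Hypothesis Hr : 0 <= r.

Local Notation nondecr_betas := (vbeta_nondecr sigma eta ahat h r a).

Lemma level_lower_bound w : - r < w < h / eta -> 0 < a * w - ahat / 4 * w ^ 2 ->
  has_pos_lower_bound nondecr_betas.
Proof.
  intros Hw Hpos. exists (a * w - ahat / 4 * w ^ 2). split; [exact Hpos |].
  intros beta [v [Hsol Hmono]]. left. exact (beta_gt_level _ _ _ _ _ _ _ v Heta Hahat Hsol Hmono w Hw).
Qed.

Lemma neg_drift_lower_bound : a < 0 -> - (ahat / 2) * r < a -> has_pos_lower_bound nondecr_betas.
Proof.
  intros Ha Har. apply (level_lower_bound (2 * a / ahat)).
  - split; [apply Rlt_div_r | apply Rlt_trans with 0; [apply Rlt_div_l | apply Rdiv_lt_0_compat]]; lra.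
  - replace (a * (2 * a / ahat) - ahat / 4 * (2 * a / ahat) ^ 2) with (a * a / ahat) by (field; lra).
    apply Rdiv_lt_0_compat; nra.
Qed.

Lemma pos_drift_lower_bound : 0 < a -> has_pos_lower_bound nondecr_betas.
Proof.
  intros Ha. set (w := Rmin (2 * a / ahat) (h / (2 * eta))).
  assert (Hw0 : 0 < w) by (apply Rmin_pos; apply Rdiv_lt_0_compat; lra).
  assert (Hwa : ahat * w <= 2 * a).
  { replace (2 * a) with (ahat * (2 * a / ahat)) by (field; lra).
    apply Rmult_le_compat_l; [lra | apply Rmin_l]. }
  assert (Hwh : w < h / eta).
  { apply Rle_lt_trans with (h / (2 * eta)); [apply Rmin_r |].
    apply Rmult_lt_compat_l; [lra | apply Rinv_lt_contravar; nra]. }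
  apply (level_lower_bound w); [lra | nra].
Qed.

Lemma no_drift_lower_bound : a = 0 -> 0 < r -> has_pos_lower_bound nondecr_betas.
Proof.
  intros Ha Hr0.
  exists (Rmin 1 (sigma ^ 2 * r * h / (4 + ahat * r ^ 2))). split.
  { apply Rmin_pos; [lra |]. apply Rdiv_lt_0_compat; [| nra].
    apply Rmult_lt_0_compat; [apply Rmult_lt_0_compat; [apply pow_lt |] |]; lra. }
  intros beta [v [Hsol Hmono]].
  destruct (Rle_or_lt 1 beta) as [Hb | Hb]; [apply Rle_trans with 1; [apply Rmin_l | exact Hb] |].
  apply Rle_trans with (sigma ^ 2 * r * h / (4 + ahat * r ^ 2)); [apply Rmin_r |].
  destruct (sol_rise sigma eta ahat h r a beta v Heta Hahat Hsol Hmono 0)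
    as (y & Hy & Hcross & Hrise); [lra | lra | split; [lra | apply Rdiv_lt_0_compat; lra] |].
  rewrite Ha in Hcross, Hrise.
  apply Rle_div_l; [nra |].
  assert (Hyh : y * h <= beta) by nra.
  assert (sigma ^ 2 / 2 * ((0 + r) / 2) * (4 * h) <=
          (beta + ahat / 4 * (r ^ 2 + 0 ^ 2) - 0 * 0 + eta * y * 0) * y * (4 * h))
    by (apply Rmult_le_compat_r; lra).
  assert (0 <= beta + ahat / 4 * r ^ 2) by nra.
  assert ((beta + ahat / 4 * r ^ 2) * (y * h) <= (beta + ahat / 4 * r ^ 2) * beta)
    by (apply Rmult_le_compat_l; lra).
  assert ((beta + ahat / 4 * r ^ 2) * beta <= (1 + ahat / 4 * r ^ 2) * beta)
    by (apply Rmult_le_compat_r; nra).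
  nra.
Qed.

Lemma zero_init_lower_bound : r = 0 -> a <= 0 -> has_pos_lower_bound nondecr_betas.
Proof.
  intros Hr0 Ha.
  (* If beta < delta^2, v reaches the level delta before time 2*delta*K/h, while its slope on
     the way is O(delta), so the climb takes a time bounded below independently of delta. *)
  set (K := 1 + ahat / 4 - a).
  assert (HK : 1 <= K) by (unfold K; lra).
  set (delta := Rmin (Rmin 1 (h / (2 * eta))) (sigma ^ 2 * h ^ 2 / (16 * K ^ 2 * (h + 2 * eta * K)))).
  assert (HhK : 0 < 16 * K ^ 2 * (h + 2 * eta * K)).
  { assert (0 < K ^ 2) by (apply pow_lt; lra).
    apply Rmult_lt_0_compat; nra. }
  assert (Hd0 : 0 < delta).
  { assert (0 < sigma ^ 2 * h ^ 2) by (apply Rmult_lt_0_compat; apply pow_lt; lra).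
    apply Rmin_pos; [apply Rmin_pos |]; try apply Rdiv_lt_0_compat; lra. }
  assert (Hd1 : delta <= 1) by (eapply Rle_trans; apply Rmin_l).
  assert (Hd2 : 2 * eta * delta <= h).
  { apply Rle_trans with (2 * eta * (h / (2 * eta))); [| right; field; lra].
    apply Rmult_le_compat_l; [lra |]. eapply Rle_trans; [apply Rmin_l | apply Rmin_r]. }
  assert (Hd3 : delta * (16 * K ^ 2 * (h + 2 * eta * K)) <= sigma ^ 2 * h ^ 2)
    by (apply Rle_div_r; [lra | apply Rmin_r]).
  exists (delta ^ 2). split; [apply pow_lt; lra |].
  intros beta [v [Hsol Hmono]].
  apply Rnot_lt_le; intros Hb.
  destruct (sol_rise sigma eta ahat h r a beta v Heta Hahat Hsol Hmono delta)
    as (y & Hy & Hcross & Hrise); [lra | lra | split; [lra | apply Rlt_div_r; lra] |].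
  set (P := beta + ahat / 4 * delta ^ 2 - a * delta) in *.
  replace (sigma ^ 2 / 2 * ((delta + r) / 2)) with (sigma ^ 2 / 4 * delta) in Hrise by (rewrite Hr0; field).
  replace (beta + ahat / 4 * (r ^ 2 + delta ^ 2) - a * delta) with P in Hrise by (unfold P; rewrite Hr0; ring).
  assert (HP : P <= delta * K).
  { assert (Hdd : delta ^ 2 <= delta) by nra.
    assert (ahat / 4 * delta ^ 2 <= ahat / 4 * delta) by (apply Rmult_le_compat_l; lra).
    unfold P, K. nra. }
  assert (Hyh : y * h <= 2 * delta * K).
  { assert (y * (2 * eta * delta) <= y * h) by (apply Rmult_le_compat_l; lra). lra. }
  assert (HM : (P + eta * y * delta) * h <= delta * K * (h + 2 * eta * K)).
  { assert (P * h <= delta * K * h) by (apply Rmult_le_compat_r; lra).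
    assert (eta * delta * (y * h) <= eta * delta * (2 * delta * K))
      by (apply Rmult_le_compat_l; nra).
    assert (eta * delta * (2 * delta * K) <= eta * delta * (2 * K * K))
      by (apply Rmult_le_compat_l; nra).
    lra. }
  assert (sigma ^ 2 / 4 * delta * h ^ 2 <= delta * K * (h + 2 * eta * K) * (2 * delta * K)).
  { apply Rle_trans with ((P + eta * y * delta) * h * (y * h)).
    - replace ((P + eta * y * delta) * h * (y * h)) with ((P + eta * y * delta) * y * h ^ 2) by ring.
      apply Rmult_le_compat_r; [nra | exact Hrise].
    - apply Rmult_le_compat; nra. }
  assert (delta * (delta * (16 * K ^ 2 * (h + 2 * eta * K))) <= delta * (sigma ^ 2 * h ^ 2))
    by (apply Rmult_le_compat_l; lra).
  assert (0 < sigma ^ 2 * h ^ 2 * delta)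
    by (apply Rmult_lt_0_compat; [apply Rmult_lt_0_compat; apply pow_lt |]; lra).
  lra.
Qed.

Lemma I1_lower_bound : a > - (ahat / 4) * r -> has_pos_lower_bound (I1 sigma eta ahat h r a).
Proof.
  intros Ha. apply (has_pos_lower_bound_sub _ nondecr_betas); [intros b [_ Hb]; exact Hb |].
  destruct (Rtotal_order a 0) as [Hneg | [Hz | Hpos]].
  - apply neg_drift_lower_bound; nra.
  - apply no_drift_lower_bound; [exact Hz | nra].
  - exact (pos_drift_lower_bound Hpos).
Qed.

Lemma I2_lower_bound : a <= - (ahat / 4) * r -> has_pos_lower_bound (I2 sigma eta ahat h r a).
Proof.
  intros Ha. destruct (Rlt_or_le 0 (beta2_low ahat r a)) as [Hpos | Hle].
  { exists (beta2_low ahat r a). split; [exact Hpos |]. intros b [Hb _]. lra. }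
  apply (has_pos_lower_bound_sub _ nondecr_betas); [intros b [_ Hb]; exact Hb |].
  unfold beta2_low in Hle. destruct Hr as [Hr0 | Hr0].
  - assert (Hae : r * (a + ahat / 4 * r) = 0) by nra.
    apply Rmult_integral in Hae as [Hr0' | Hae]; [lra |].
    apply neg_drift_lower_bound; nra.
  - apply zero_init_lower_bound; [now symmetry | nra].
Qed.

End LowerBounds.

Theorem lemma21 (sigma eta ahat h r a : R)
  (Hsigma : 0 < sigma) (Heta : 0 < eta) (Hahat : 0 < ahat) (Hh : 0 < h)
  (Hr : 0 <= r) :
  (a > - (ahat / 4) * r ->
     Rbar_lt (Finite 0) (Glb_Rbar (I1 sigma eta ahat h r a))) /\
  (a <= - (ahat / 4) * r ->
     Rbar_lt (Finite 0) (Glb_Rbar (I2 sigma eta ahat h r a))).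
Proof.
  split; intros Ha; apply Glb_Rbar_gt0.
  - now apply I1_lower_bound.
  - now apply I2_lower_bound.
Qed.
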